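(* Under i.i.d. Rayleigh fading on all $2M$ links with average SNR $\bar\gamma$, as $\bar\gamma\to0$, $$\bar R_{SD}\sim\frac{\bar\gamma}{2\ln2}\sum_{k=1}^{2M}\frac1k,\qquad \bar R_{\rm conv}\sim\frac{\bar\gamma}{4\ln2}\sum_{k=1}^{M}\frac1k,$$ so that $\lim_{\bar\gamma\to0}\bar R_{SD}/\bar R_{\rm conv}=2\sum_{k=1}^{2M}\frac1k\big/\sum_{k=1}^M\frac1k$, which equals $3$ for $M=1$, tends to $2$ as $M\to\infty$, and lies in $[2,3]$ for all $M\ge1$.
   Context: Network of a source, $M$ relays, and a destination; SNRs $\gamma_{Sk},\gamma_{kD}$ of the $2M$ links are i.i.d. exponential with mean $\bar\gamma$ (Rayleigh fading). $\bar R_{SD}=M\int_0^\infty\log_2(1+x)f_\gamma(x)(F_\gamma(x))^{2M-1}dx$ with $f_\gamma(x)=e^{-x/\bar\gamma}/\bar\gamma$, $F_\gamma(x)=1-e^{-x/\bar\gamma}$ (the maximum average rate of the buffer-aided protocol). $\bar R_{\rm conv}=\frac12E\{\max_k\min\{\log_2(1+\gamma_{Sk}),\log_2(1+\gamma_{kD})\}\}$ is the average rate of conventional (non-buffer-aided) relay selection; in this i.i.d. Rayleigh case $\bar R_{\rm conv}=\frac M2\sum_{k=0}^{M-1}\binom{M-1}{k}\frac{(-1)^k}{(1+k)\ln2}e^{2(1+k)/\bar\gamma}E_1(2(1+k)/\bar\gamma)$, where $E_1(x)=\int_1^\infty e^{-xt}/t\,dt$. $f\sim g$ means $f/g\to1$.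 *)

From Stdlib Require Import Reals Lra Lia ClassicalEpsilon.
Open Scope R_scope.

Definition log2 (x : R) : R := ln x / ln 2.

Fixpoint harm (n : nat) : R :=
  match n with
  | O => 0
  | S m => harm m + / INR (S m)
  end.

Definition improper_integral (f : R -> R) (a l : R) : Prop :=
  forall eps, 0 < eps -> exists B, forall b, B <= b ->
    exists pr : Riemann_integrable f a b, Rabs (RiemannInt pr - l) < eps.

(* the value of the improper integral (chosen by epsilon; meaningful when it converges) *)
Definition improper_int (f : R -> R) (a : R) : R :=
  epsilon (inhabits 0) (fun l => improper_integral f a l).

(* Rayleigh-fading SNR pdf and cdf with mean gbar *)
Definition f_gamma (gbar x : R) : R := exp (- x / gbar) / gbar.
Definition F_gamma (gbar x : R) : R := 1 - exp (- x / gbar).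

Definition R_SD (M : nat) (gbar : R) : R :=
  INR M * improper_int
    (fun x => log2 (1 + x) * f_gamma gbar x * F_gamma gbar x ^ (2 * M - 1)) 0.

Definition E1 (x : R) : R := improper_int (fun t => exp (- x * t) / t) 1.

(* closed form of the conventional relay-selection rate (i.i.d. Rayleigh) *)
Definition R_conv (M : nat) (gbar : R) : R :=
  INR M / 2 * sum_f_R0 (fun k =>
     C (M - 1) k * (-1) ^ k / ((1 + INR k) * ln 2)
     * exp (2 * (1 + INR k) / gbar) * E1 (2 * (1 + INR k) / gbar)) (M - 1).

(* Expanding F^(2M-1) binomially turns every integral into a combination of
   int x^k e^(-c x) dx.  Since x - x^2 <= ln (1 + x) <= x, R_SD equals its first-order
   term up to O(gbar^2), and that term is evaluated by the identity
   sum_j C(m,j) (-1)^j / (j+1)^2 = H_(m+1) / (m+1).  For R_conv, the bounds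
   1/x - 1/x^2 <= e^x E1(x) <= 1/x make the closed form equal to the same kind of sum
   up to O(gbar^2).  The statements about the limit ratio 2 H_(2M) / H_M follow from
   H_(2M) - H_M lying in [1/2, 1) and from the divergence of H_M. *)

From Coquelicot Require Import Coquelicot.
From Stdlib Require Import Reals Lra Lia ClassicalEpsilon.
Open Scope R_scope.

(** * Improper integrals *)

Definition is_RInt_pinfty (f : R -> R) (a l : R) : Prop :=
  (forall b, a <= b -> ex_RInt f a b) /\
  (forall eps, 0 < eps -> exists B, forall b, B <= b -> Rabs (RInt f a b - l) < eps).

Lemma is_RInt_pinfty_improper_integral f a l :
  is_RInt_pinfty f a l -> improper_integral f a l.
Proof.
  intros [Hex Hlim] eps Heps. destruct (Hlim eps Heps) as [B HB].
  exists (Rmax a B). intros b Hb.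
  assert (Hab : a <= b) by (eapply Rle_trans; [apply Rmax_l | exact Hb]).
  exists (ex_RInt_Reals_0 _ _ _ (Hex b Hab)).
  rewrite <- RInt_Reals. apply HB. eapply Rle_trans; [apply Rmax_r | exact Hb].
Qed.

Lemma improper_integral_unique f a l1 l2 :
  improper_integral f a l1 -> improper_integral f a l2 -> l1 = l2.
Proof.
  intros H1 H2. destruct (Req_dec l1 l2) as [E | E]; [exact E | exfalso].
  assert (Hd : 0 < Rabs (l1 - l2) / 2).
  { assert (0 < Rabs (l1 - l2)) by (apply Rabs_pos_lt; lra). lra. }
  destruct (H1 _ Hd) as [B1 HB1]. destruct (H2 _ Hd) as [B2 HB2].
  destruct (HB1 (Rmax B1 B2) (Rmax_l _ _)) as [p1 Hp1].
  destruct (HB2 (Rmax B1 B2) (Rmax_r _ _)) as [p2 Hp2].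
  rewrite (RiemannInt_P5 p2 p1) in Hp2.
  assert (Rabs (l1 - l2) <= Rabs (RiemannInt p1 - l1) + Rabs (RiemannInt p1 - l2)).
  { replace (l1 - l2) with (- (RiemannInt p1 - l1) + (RiemannInt p1 - l2)) by ring.
    eapply Rle_trans; [apply Rabs_triang | rewrite Rabs_Ropp; lra]. }
  lra.
Qed.

Lemma improper_int_eq f a l : is_RInt_pinfty f a l -> improper_int f a = l.
Proof.
  intros H. unfold improper_int.
  apply (improper_integral_unique f a); [| now apply is_RInt_pinfty_improper_integral].
  apply epsilon_spec. exists l. now apply is_RInt_pinfty_improper_integral.
Qed.

Lemma is_RInt_pinfty_ext f g a l :
  (forall x, a <= x -> f x = g x) -> is_RInt_pinfty f a l -> is_RInt_pinfty g a l.
Proof.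
  intros Hfg [Hex Hlim].
  assert (Heq : forall b, a <= b -> forall x, Rmin a b < x < Rmax a b -> f x = g x).
  { intros b Hb x Hx. rewrite Rmin_left in Hx by lra. apply Hfg; lra. }
  split.
  - intros b Hb. apply ex_RInt_ext with f; [apply Heq | apply Hex]; exact Hb.
  - intros eps Heps. destruct (Hlim eps Heps) as [B HB]. exists (Rmax a B).
    intros b Hb. assert (a <= b) by (eapply Rle_trans; [apply Rmax_l | exact Hb]).
    rewrite <- (RInt_ext f) by (apply Heq; assumption).
    apply HB. eapply Rle_trans; [apply Rmax_r | exact Hb].
Qed.

Lemma is_RInt_pinfty_plus f g a lf lg :
  is_RInt_pinfty f a lf -> is_RInt_pinfty g a lg ->
  is_RInt_pinfty (fun x => f x + g x) a (lf + lg).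
Proof.
  intros [Fex Flim] [Gex Glim]. split.
  - intros b Hb. apply (ex_RInt_plus f g); auto.
  - intros eps Heps.
    destruct (Flim (eps / 2)) as [B1 HB1]; [lra |].
    destruct (Glim (eps / 2)) as [B2 HB2]; [lra |].
    exists (Rmax a (Rmax B1 B2)). intros b Hb.
    pose proof (Rmax_l a (Rmax B1 B2)). pose proof (Rmax_r a (Rmax B1 B2)).
    pose proof (Rmax_l B1 B2). pose proof (Rmax_r B1 B2).
    rewrite (RInt_plus f g) by (apply Fex || apply Gex; lra).
    specialize (HB1 b ltac:(lra)). specialize (HB2 b ltac:(lra)).
    change (plus (RInt f a b) (RInt g a b)) with (RInt f a b + RInt g a b).
    replace (RInt f a b + RInt g a b - (lf + lg))
      with ((RInt f a b - lf) + (RInt g a b - lg)) by ring.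
    eapply Rle_lt_trans; [apply Rabs_triang | lra].
Qed.

Lemma is_RInt_pinfty_scal f a l c :
  is_RInt_pinfty f a l -> is_RInt_pinfty (fun x => c * f x) a (c * l).
Proof.
  intros [Fex Flim]. split.
  - intros b Hb. apply (ex_RInt_scal f); auto.
  - intros eps Heps. pose proof (Rabs_pos c).
    destruct (Flim (eps / (Rabs c + 1))) as [B HB].
    { apply Rdiv_lt_0_compat; lra. }
    exists (Rmax a B). intros b Hb.
    pose proof (Rmax_l a B). pose proof (Rmax_r a B).
    rewrite (RInt_scal f) by (apply Fex; lra).
    change (scal c (RInt f a b)) with (c * RInt f a b).
    replace (c * RInt f a b - c * l) with (c * (RInt f a b - l)) by ring.
    rewrite Rabs_mult. specialize (HB b ltac:(lra)).
    apply Rmult_lt_compat_l with (r := Rabs c + 1) in HB; [| lra].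
    replace ((Rabs c + 1) * (eps / (Rabs c + 1))) with eps in HB by (field; lra).
    pose proof (Rabs_pos (RInt f a b - l)). nra.
Qed.

Lemma is_RInt_pinfty_sum (F : nat -> R -> R) (L : nat -> R) a n :
  (forall j, (j <= n)%nat -> is_RInt_pinfty (F j) a (L j)) ->
  is_RInt_pinfty (fun x => sum_f_R0 (fun j => F j x) n) a (sum_f_R0 L n).
Proof.
  induction n as [| n IH]; intros H; simpl.
  - apply H; lia.
  - apply is_RInt_pinfty_plus; [apply IH; intros; apply H |apply H]; lia.
Qed.

Lemma is_RInt_pinfty_le f g a lf lg :
  (forall x, a <= x -> f x <= g x) ->
  is_RInt_pinfty f a lf -> is_RInt_pinfty g a lg -> lf <= lg.
Proof.
  intros Hfg [Fex Flim] [Gex Glim].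
  destruct (Rle_dec lf lg) as [E | E]; [exact E | exfalso].
  destruct (Flim ((lf - lg) / 2)) as [B1 HB1]; [lra |].
  destruct (Glim ((lf - lg) / 2)) as [B2 HB2]; [lra |].
  set (b := Rmax a (Rmax B1 B2)).
  pose proof (Rmax_l a (Rmax B1 B2)). pose proof (Rmax_r a (Rmax B1 B2)).
  pose proof (Rmax_l B1 B2). pose proof (Rmax_r B1 B2).
  specialize (HB1 b ltac:(unfold b; lra)). specialize (HB2 b ltac:(unfold b; lra)).
  assert (RInt f a b <= RInt g a b).
  { apply RInt_le; try apply Fex; try apply Gex; unfold b in *; try lra.
    intros x Hx. apply Hfg. lra. }
  apply Rabs_def2 in HB1. apply Rabs_def2 in HB2. lra.
Qed.

Lemma RInt_nonneg_upper_mono (h : R -> R) a b b' :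
  a <= b <= b' -> ex_RInt h a b' -> (forall x, a <= x -> 0 <= h x) ->
  RInt h a b <= RInt h a b'.
Proof.
  intros Hb He Hpos.
  assert (E1 : ex_RInt h a b) by (apply (ex_RInt_Chasles_1 h a b b'); auto).
  assert (E2 : ex_RInt h b b') by (apply (ex_RInt_Chasles_2 h a b b'); auto).
  rewrite <- (RInt_Chasles h a b b' E1 E2).
  change (plus (RInt h a b) (RInt h b b')) with (RInt h a b + RInt h b b').
  assert (0 <= RInt h b b'); [| lra].
  apply RInt_ge_0; [lra | auto |]. intros; apply Hpos; lra.
Qed.

(* Monotone convergence: the partial integrals of [h] increase and are bounded by
   the integral of [k], so they converge to their supremum. *)
Lemma is_RInt_pinfty_dominated (h k : R -> R) a lk :
  (forall x, a <= x -> continuous h x) -> (forall x, a <= x -> 0 <= h x <= k x) ->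
  is_RInt_pinfty k a lk -> exists l, is_RInt_pinfty h a l.
Proof.
  intros Hc Hhk [Kex Klim].
  assert (Hex : forall b, a <= b -> ex_RInt h a b).
  { intros b Hb. apply (@ex_RInt_continuous R_CompleteNormedModule). intros z Hz.
    rewrite Rmin_left in Hz by lra. apply Hc; lra. }
  set (E := fun y => exists b, a <= b /\ y = RInt h a b).
  assert (Hbd : bound E).
  { destruct (Klim 1) as [B1 HB1]; [lra |].
    exists (lk + 1). intros y [b [Hb ->]].
    set (b' := Rmax b (Rmax a B1)).
    pose proof (Rmax_l b (Rmax a B1)). pose proof (Rmax_r b (Rmax a B1)).
    pose proof (Rmax_l a B1). pose proof (Rmax_r a B1).
    apply Rle_trans with (RInt h a b').
    { apply RInt_nonneg_upper_mono; unfold b'; auto; try lra.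
      - apply Hex; lra.
      - intros; apply Hhk; auto. }
    apply Rle_trans with (RInt k a b').
    { apply RInt_le; unfold b'; try lra; try apply Hex; try apply Kex; try lra.
      intros; apply Hhk; lra. }
    specialize (HB1 b' ltac:(unfold b'; lra)). apply Rabs_def2 in HB1. lra. }
  destruct (completeness E Hbd) as [m [Hub Hlub]].
  { exists (RInt h a a). exists a. split; [lra | auto]. }
  exists m. split; [exact Hex |].
  intros eps Heps.
  destruct (Classical_Prop.classic (exists b, a <= b /\ m - eps < RInt h a b))
    as [[b0 [Hb0 Hlt]] | Hn].
  - exists b0. intros b Hb.
    assert (RInt h a b0 <= RInt h a b).
    { apply RInt_nonneg_upper_mono; [lra | apply Hex; lra |]. intros; apply Hhk; auto. }
    assert (RInt h a b <= m) by (apply Hub; exists b; split; [lra | auto]).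
    apply Rabs_def1; lra.
  - exfalso. assert (m <= m - eps); [| lra].
    apply Hlub. intros y [b [Hb ->]].
    destruct (Rle_dec (RInt h a b) (m - eps)) as [? | Hx]; [auto |].
    exfalso; apply Hn; exists b; split; [auto | lra].
Qed.

Lemma is_RInt_pinfty_antiderivative (f F : R -> R) a :
  (forall t, a <= t -> is_derive F t (f t)) -> (forall t, a <= t -> continuous f t) ->
  (forall eps, 0 < eps -> exists B, forall b, B <= b -> Rabs (F b) < eps) ->
  is_RInt_pinfty f a (- F a).
Proof.
  intros Hd Hc Hlim.
  assert (HI : forall b, a <= b -> is_RInt f a b (minus (F b) (F a))).
  { intros b Hb. apply (@is_RInt_derive R_CompleteNormedModule); intros x Hx;
      rewrite Rmin_left in Hx by lra; [apply Hd | apply Hc]; lra. }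
  split.
  - intros b Hb. eexists; apply HI; auto.
  - intros eps Heps. destruct (Hlim eps Heps) as [B HB]. exists (Rmax a B).
    intros b Hb. pose proof (Rmax_l a B). pose proof (Rmax_r a B).
    rewrite (is_RInt_unique _ _ _ _ (HI b ltac:(lra))).
    change (minus (F b) (F a)) with (F b - F a).
    replace (F b - F a - - F a) with (F b) by ring. apply HB. lra.
Qed.

(** * Integrals of polynomials times exponentials *)

Lemma exp_ge_cube y : 0 <= y -> y * y * y / 27 <= exp y.
Proof.
  intros Hy. replace y with (y / 3 + y / 3 + y / 3) at 4 by field.
  rewrite !exp_plus. pose proof (exp_ineq1_le (y / 3)).
  replace (y * y * y / 27) with ((y / 3) * (y / 3) * (y / 3)) by field.
  apply Rmult_le_compat; try nra; apply Rmult_le_compat; nra.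
Qed.

Lemma quadratic_exp_vanishes c K : 0 < c -> 0 < K ->
  forall eps, 0 < eps -> exists B, forall b, B <= b -> K * (b * b + b + 1) * exp (- c * b) < eps.
Proof.
  intros Hc HK eps Heps.
  assert (Hc3 : 0 < c * c * c * eps) by (repeat apply Rmult_lt_0_compat; lra).
  exists (1 + 81 * K / (c * c * c * eps)). intros b Hb.
  assert (0 <= 81 * K / (c * c * c * eps)) by (apply Rlt_le, Rdiv_lt_0_compat; lra).
  assert (HB : 81 * K < c * c * c * eps * b).
  { apply Rmult_le_compat_l with (r := c * c * c * eps) in Hb; [| lra].
    replace (c * c * c * eps * (1 + 81 * K / (c * c * c * eps)))
      with (c * c * c * eps + 81 * K) in Hb by (field; lra). lra. }
  pose proof (exp_ge_cube (c * b) ltac:(nra)) as Hcube.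
  replace (exp (- c * b)) with (/ exp (c * b)) by (rewrite <- exp_Ropp; f_equal; ring).
  pose proof (exp_pos (c * b)).
  apply Rmult_lt_reg_r with (exp (c * b)); [lra |].
  rewrite Rmult_assoc, Rinv_l, Rmult_1_r by lra.
  (* [K (b^2 + b + 1) <= 3 K b^2 < eps (cb)^3 / 27 <= eps e^(cb)] *)
  assert (b * b + b + 1 <= 3 * (b * b)) by nra.
  assert (K * (b * b + b + 1) <= 3 * K * (b * b)) by nra.
  assert (3 * K * (b * b) * 27 < c * c * c * eps * b * (b * b)).
  { replace (3 * K * (b * b) * 27) with (81 * K * (b * b)) by ring.
    apply Rmult_lt_compat_r; nra. }
  assert (eps * (c * b * (c * b) * (c * b) / 27) <= eps * exp (c * b))
    by (apply Rmult_le_compat_l; lra).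
  nra.
Qed.

Lemma is_RInt_pinfty_decaying_antiderivative (f F : R -> R) a c K :
  0 < c -> 0 < K ->
  (forall t, a <= t -> is_derive F t (f t)) -> (forall t, a <= t -> continuous f t) ->
  (forall b, 0 <= b -> Rabs (F b) <= K * (b * b + b + 1) * exp (- c * b)) ->
  is_RInt_pinfty f a (- F a).
Proof.
  intros Hc HK Hd Hcf Hbound. apply is_RInt_pinfty_antiderivative; auto.
  intros eps Heps. destruct (quadratic_exp_vanishes c K Hc HK eps Heps) as [B HB].
  exists (Rmax 0 B). intros b Hb. pose proof (Rmax_l 0 B). pose proof (Rmax_r 0 B).
  eapply Rle_lt_trans; [apply Hbound | apply HB]; lra.
Qed.

Lemma continuous_of_ex_derive (f : R -> R) x : ex_derive f x -> continuous f x.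
Proof. apply (@ex_derive_continuous R_AbsRing R_NormedModule). Qed.

Lemma is_RInt_pinfty_exp c a : 0 < c ->
  is_RInt_pinfty (fun t => exp (- c * t)) a (exp (- c * a) / c).
Proof.
  intros Hc. pose proof (Rinv_0_lt_compat c Hc).
  replace (exp (- c * a) / c) with (- (- exp (- c * a) / c)) by (field; lra).
  apply (is_RInt_pinfty_decaying_antiderivative _ (fun t => - exp (- c * t) / c) a c (/ c));
    auto.
  - intros t _. auto_derive; auto. field; lra.
  - intros t _. apply continuous_of_ex_derive. auto_derive; auto.
  - intros b Hb. pose proof (exp_pos (- c * b)).
    assert (0 < exp (- c * b) / c) by (apply Rdiv_lt_0_compat; lra).
    cbv beta; rewrite Rabs_left1 by (unfold Rdiv in *; lra).
    assert (1 <= b * b + b + 1) by nra. unfold Rdiv in *. nra.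
Qed.

Lemma is_RInt_pinfty_id_exp c a : 0 <= a -> 0 < c ->
  is_RInt_pinfty (fun t => t * exp (- c * t)) a ((a / c + 1 / (c * c)) * exp (- c * a)).
Proof.
  intros Ha Hc. pose proof (Rinv_0_lt_compat c Hc).
  assert (0 < / (c * c)) by (apply Rinv_0_lt_compat; nra).
  replace ((a / c + 1 / (c * c)) * exp (- c * a))
    with (- (- ((a / c + 1 / (c * c)) * exp (- c * a)))) by ring.
  apply (is_RInt_pinfty_decaying_antiderivative _
           (fun t => - ((t / c + 1 / (c * c)) * exp (- c * t))) a c (/ c + / (c * c)));
    auto; try lra.
  - intros t _. auto_derive; auto. field; lra.
  - intros t _. apply continuous_of_ex_derive. auto_derive; auto.
  - intros b Hb. pose proof (exp_pos (- c * b)).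
    assert (0 <= b / c) by (apply Rmult_le_pos; lra).
    cbv beta; rewrite Rabs_Ropp, Rabs_pos_eq by (apply Rmult_le_pos; unfold Rdiv in *; lra).
    apply Rmult_le_compat_r; [lra |]. unfold Rdiv in *. nra.
Qed.

Lemma is_RInt_pinfty_sqr_exp c a : 0 <= a -> 0 < c ->
  is_RInt_pinfty (fun t => t * t * exp (- c * t)) a
    ((a * a / c + 2 * a / (c * c) + 2 / (c * c * c)) * exp (- c * a)).
Proof.
  intros Ha Hc. pose proof (Rinv_0_lt_compat c Hc).
  assert (0 < / (c * c)) by (apply Rinv_0_lt_compat; nra).
  assert (0 < / (c * c * c)) by (apply Rinv_0_lt_compat; repeat apply Rmult_lt_0_compat; lra).
  replace ((a * a / c + 2 * a / (c * c) + 2 / (c * c * c)) * exp (- c * a))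
    with (- (- ((a * a / c + 2 * a / (c * c) + 2 / (c * c * c)) * exp (- c * a)))) by ring.
  apply (is_RInt_pinfty_decaying_antiderivative _
           (fun t => - ((t * t / c + 2 * t / (c * c) + 2 / (c * c * c)) * exp (- c * t)))
           a c (/ c + 2 * / (c * c) + 2 * / (c * c * c))); auto; try lra.
  - intros t _. auto_derive; auto. field; lra.
  - intros t _. apply continuous_of_ex_derive. auto_derive; auto.
  - intros b Hb. pose proof (exp_pos (- c * b)).
    assert (0 <= b * b / c) by (unfold Rdiv; apply Rmult_le_pos; nra).
    assert (0 <= 2 * b / (c * c)) by (unfold Rdiv; apply Rmult_le_pos; nra).
    cbv beta; rewrite Rabs_Ropp, Rabs_pos_eq by (apply Rmult_le_pos; unfold Rdiv in *; nra).
    apply Rmult_le_compat_r; [lra |]. unfold Rdiv in *. nra.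
Qed.

(** * Alternating binomial sums and the Rayleigh moments *)

Lemma C_div_succ m j : (j <= m)%nat -> C m j / (INR j + 1) = C (S m) (S j) / (INR m + 1).
Proof.
  intros Hj. unfold C. replace (S m - S j)%nat with (m - j)%nat by lia.
  change (Factorial.fact (S m)) with (S m * Factorial.fact m)%nat.
  change (Factorial.fact (S j)) with (S j * Factorial.fact j)%nat.
  rewrite !mult_INR, !S_INR.
  pose proof (INR_fact_neq_0 m). pose proof (INR_fact_neq_0 j).
  pose proof (INR_fact_neq_0 (m - j)). pose proof (pos_INR j). pose proof (pos_INR m).
  field. repeat split; lra.
Qed.

(* [(1 - 1)^(m+1) = 0] with the [j = 0] term split off. *)
Lemma alt_binom_sum_succ m : sum_f_R0 (fun j => C (S m) (S j) * (-1) ^ j) m = 1.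
Proof.
  pose proof (binomial (-1) 1 (S m)) as Hb.
  replace (-1 + 1) with 0 in Hb by ring. rewrite pow_ne_zero in Hb by lia.
  rewrite decomp_sum in Hb by lia. simpl pred in Hb.
  rewrite C_n_0, pow1 in Hb.
  rewrite (sum_eq _ (fun i => (C (S m) (S i) * (-1) ^ i) * (-1))) in Hb.
  2: { intros i _. rewrite pow1. simpl. ring. }
  rewrite <- scal_sum in Hb. simpl in Hb. lra.
Qed.

Lemma alt_binom_div_succ m :
  sum_f_R0 (fun j => C m j * (-1) ^ j / (INR j + 1)) m = 1 / (INR m + 1).
Proof.
  rewrite (sum_eq _ (fun j => (C (S m) (S j) * (-1) ^ j) * / (INR m + 1))).
  - rewrite <- scal_sum, alt_binom_sum_succ. field. pose proof (pos_INR m); lra.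
  - intros i Hi.
    replace (C m i * (-1) ^ i / (INR i + 1)) with (C m i / (INR i + 1) * (-1) ^ i)
      by (pose proof (pos_INR i); field; lra).
    rewrite C_div_succ by lia. unfold Rdiv; ring.
Qed.

Lemma alt_binom_succ_harm m :
  sum_f_R0 (fun j => C (S m) (S j) * (-1) ^ j / (INR j + 1)) m = harm (S m).
Proof.
  induction m as [| m IH].
  - simpl. rewrite C_n_n. field.
  - rewrite tech5.
    rewrite (sum_eq _ (fun j => C (S m) j * (-1) ^ j / (INR j + 1) +
                               C (S m) (S j) * (-1) ^ j / (INR j + 1))).
    2: { intros i Hi. rewrite <- pascal by lia. pose proof (pos_INR i). field. lra. }
    rewrite sum_plus, IH.
    pose proof (alt_binom_div_succ (S m)) as HB. rewrite tech5 in HB.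
    rewrite !C_n_n in *.
    change (harm (S (S m))) with (harm (S m) + / INR (S (S m))).
    rewrite (S_INR (S m)) in *. pose proof (pos_INR (S m)).
    replace (sum_f_R0 (fun j : nat => C (S m) j * (-1) ^ j / (INR j + 1)) m) with
      (1 / (INR (S m) + 1) - 1 * (-1) ^ S m / (INR (S m) + 1)) by lra.
    field. lra.
Qed.

Lemma alt_binom_div_succ_sqr m :
  sum_f_R0 (fun j => C m j * (-1) ^ j / (INR j + 1) ^ 2) m = harm (S m) / (INR m + 1).
Proof.
  rewrite (sum_eq _ (fun j => (C (S m) (S j) * (-1) ^ j / (INR j + 1)) * / (INR m + 1))).
  - rewrite <- scal_sum, alt_binom_succ_harm. unfold Rdiv. ring.
  - intros i Hi. pose proof (pos_INR i).
    replace (C m i * (-1) ^ i / (INR i + 1) ^ 2)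
      with (C m i / (INR i + 1) * ((-1) ^ i / (INR i + 1))) by (field; lra).
    rewrite C_div_succ by exact Hi. field. pose proof (pos_INR m). lra.
Qed.

Lemma exp_pow y n : exp y ^ n = exp (INR n * y).
Proof.
  induction n as [| n IH].
  - simpl. rewrite Rmult_0_l, exp_0. ring.
  - simpl pow. rewrite IH, <- exp_plus, S_INR. f_equal; ring.
Qed.

Lemma rayleigh_integrand_expand (q : R -> R) g m x : 0 < g ->
  q x * f_gamma g x * F_gamma g x ^ m =
  sum_f_R0 (fun j => C m j * (-1) ^ j / g * (q x * exp (- ((INR j + 1) / g) * x))) m.
Proof.
  intros Hg. unfold F_gamma, f_gamma.
  replace (1 - exp (- x / g)) with ((-1) * exp (- x / g) + 1) by ring.
  rewrite binomial, scal_sum. apply sum_eq. intros j Hj.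
  rewrite pow1, Rpow_mult_distr, exp_pow.
  replace (exp (- ((INR j + 1) / g) * x)) with (exp (INR j * (- x / g)) * exp (- x / g)).
  - field. lra.
  - rewrite <- exp_plus. f_equal. field. lra.
Qed.

Lemma rayleigh_first_moment g m : 0 < g ->
  is_RInt_pinfty (fun x => x * f_gamma g x * F_gamma g x ^ m) 0
    (g * sum_f_R0 (fun j => C m j * (-1) ^ j / (INR j + 1) ^ 2) m).
Proof.
  intros Hg.
  eapply is_RInt_pinfty_ext.
  { intros x _. symmetry. apply (rayleigh_integrand_expand (fun x => x)), Hg. }
  rewrite scal_sum. erewrite sum_eq.
  - apply is_RInt_pinfty_sum. intros j _. apply is_RInt_pinfty_scal.
    apply is_RInt_pinfty_id_exp; [lra |].
    pose proof (pos_INR j). apply Rdiv_lt_0_compat; lra.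
  - intros j _. pose proof (pos_INR j). cbv beta.
    replace (- ((INR j + 1) / g) * 0) with 0 by ring. rewrite exp_0. field. lra.
Qed.

Lemma rayleigh_second_moment g m : 0 < g ->
  is_RInt_pinfty (fun x => x * x * f_gamma g x * F_gamma g x ^ m) 0
    (2 * g * g * sum_f_R0 (fun j => C m j * (-1) ^ j / (INR j + 1) ^ 3) m).
Proof.
  intros Hg.
  eapply is_RInt_pinfty_ext.
  { intros x _. symmetry. apply (rayleigh_integrand_expand (fun x => x * x)), Hg. }
  rewrite scal_sum. erewrite sum_eq.
  - apply is_RInt_pinfty_sum. intros j _. apply is_RInt_pinfty_scal.
    apply is_RInt_pinfty_sqr_exp; [lra |].
    pose proof (pos_INR j). apply Rdiv_lt_0_compat; lra.
  - intros j _. pose proof (pos_INR j). cbv beta.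
    replace (- ((INR j + 1) / g) * 0) with 0 by ring. rewrite exp_0. field. lra.
Qed.

(** * The buffer-aided rate *)

Lemma ln2_pos : 0 < ln 2.
Proof. pose proof ln_lt_2. lra. Qed.

Lemma ln_le_sub_1 y : 0 < y -> ln y <= y - 1.
Proof.
  intros Hy. rewrite <- (ln_exp (y - 1)). apply ln_le; auto.
  pose proof (exp_ineq1_le (y - 1)). lra.
Qed.

Lemma ln1p_bounds x : 0 <= x -> x - x * x <= ln (1 + x) <= x.
Proof.
  intros Hx. split.
  - pose proof (ln_le_sub_1 (/ (1 + x)) ltac:(apply Rinv_0_lt_compat; lra)) as Hinv.
    rewrite ln_Rinv in Hinv by lra.
    assert (x - x * x <= 1 - / (1 + x)); [| lra].
    apply Rmult_le_reg_r with (1 + x); [lra |].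
    replace ((1 - / (1 + x)) * (1 + x)) with x by (field; lra). nra.
  - pose proof (ln_le_sub_1 (1 + x)). lra.
Qed.

Lemma rayleigh_weight_nonneg g m x : 0 < g -> 0 <= x -> 0 <= f_gamma g x * F_gamma g x ^ m.
Proof.
  intros Hg Hx. unfold f_gamma, F_gamma. apply Rmult_le_pos.
  - apply Rlt_le, Rdiv_lt_0_compat; [apply exp_pos | lra].
  - apply pow_le.
    assert (0 <= x / g) by (apply Rmult_le_pos; [lra | apply Rlt_le, Rinv_0_lt_compat; lra]).
    assert (1 <= exp (x / g)) by (pose proof (exp_ineq1_le (x / g)); lra).
    replace (exp (- x / g)) with (/ exp (x / g))
      by (rewrite <- exp_Ropp; f_equal; unfold Rdiv; ring).
    assert (/ exp (x / g) <= 1) by (rewrite <- Rinv_1; apply Rinv_le_contravar; lra).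
    pose proof (Rinv_0_lt_compat _ (exp_pos (x / g))). lra.
Qed.

Lemma log2_rayleigh_integrand_bounds g m x : 0 < g -> 0 <= x ->
  / ln 2 * (x * f_gamma g x * F_gamma g x ^ m)
    + - / ln 2 * (x * x * f_gamma g x * F_gamma g x ^ m)
  <= log2 (1 + x) * f_gamma g x * F_gamma g x ^ m
  <= / ln 2 * (x * f_gamma g x * F_gamma g x ^ m).
Proof.
  intros Hg Hx. pose proof (ln1p_bounds x Hx).
  pose proof (Rinv_0_lt_compat _ ln2_pos).
  pose proof (rayleigh_weight_nonneg g m x Hg Hx).
  set (w := f_gamma g x * F_gamma g x ^ m) in *.
  replace (/ ln 2 * (x * f_gamma g x * F_gamma g x ^ m)
             + - / ln 2 * (x * x * f_gamma g x * F_gamma g x ^ m))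
    with (/ ln 2 * ((x - x * x) * w)) by (unfold w; ring).
  replace (log2 (1 + x) * f_gamma g x * F_gamma g x ^ m)
    with (/ ln 2 * (ln (1 + x) * w)) by (unfold w, log2, Rdiv; ring).
  replace (x * f_gamma g x * F_gamma g x ^ m) with (x * w) by (unfold w; ring).
  split; apply Rmult_le_compat_l, Rmult_le_compat_r; lra.
Qed.

Lemma log2_rayleigh_integral_bounds g m : 0 < g -> exists l,
  is_RInt_pinfty (fun x => log2 (1 + x) * f_gamma g x * F_gamma g x ^ m) 0 l /\
  g * sum_f_R0 (fun j => C m j * (-1) ^ j / (INR j + 1) ^ 2) m
    - 2 * g * g * sum_f_R0 (fun j => C m j * (-1) ^ j / (INR j + 1) ^ 3) m
  <= l * ln 2 <= g * sum_f_R0 (fun j => C m j * (-1) ^ j / (INR j + 1) ^ 2) m.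
Proof.
  intros Hg. pose proof ln2_pos.
  pose proof (is_RInt_pinfty_scal _ _ _ (/ ln 2) (rayleigh_first_moment g m Hg)) as Hup.
  pose proof (is_RInt_pinfty_plus _ _ _ _ _ Hup
    (is_RInt_pinfty_scal _ _ _ (- / ln 2) (rayleigh_second_moment g m Hg))) as Hlow.
  set (h := fun x => log2 (1 + x) * f_gamma g x * F_gamma g x ^ m).
  assert (Hbounds : forall x, 0 <= x ->
    / ln 2 * (x * f_gamma g x * F_gamma g x ^ m)
    + - / ln 2 * (x * x * f_gamma g x * F_gamma g x ^ m) <= h x
    <= / ln 2 * (x * f_gamma g x * F_gamma g x ^ m)).
  { intros x Hx. apply log2_rayleigh_integrand_bounds; assumption. }
  assert (Hnonneg : forall x, 0 <= x -> 0 <= h x).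
  { intros x Hx. unfold h, log2, Rdiv. rewrite !Rmult_assoc.
    assert (0 <= ln (1 + x)) by (rewrite <- ln_1; apply ln_le; lra).
    apply Rmult_le_pos; [lra |]. apply Rmult_le_pos.
    - apply Rlt_le, Rinv_0_lt_compat; lra.
    - apply rayleigh_weight_nonneg; auto. }
  assert (Hcont : forall x, 0 <= x -> continuous h x).
  { intros x Hx. apply continuous_of_ex_derive.
    unfold h, log2, f_gamma, F_gamma. auto_derive; lra. }
  destruct (is_RInt_pinfty_dominated h _ 0 _ Hcont
              (fun x Hx => conj (Hnonneg x Hx) (proj2 (Hbounds x Hx))) Hup) as [l Hl].
  exists l. split; [exact Hl |].
  pose proof (is_RInt_pinfty_le _ _ _ _ _ (fun x Hx => proj2 (Hbounds x Hx)) Hl Hup).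
  pose proof (is_RInt_pinfty_le _ _ _ _ _ (fun x Hx => proj1 (Hbounds x Hx)) Hlow Hl).
  set (S2 := sum_f_R0 (fun j => C m j * (-1) ^ j / (INR j + 1) ^ 2) m) in *.
  set (S3 := sum_f_R0 (fun j => C m j * (-1) ^ j / (INR j + 1) ^ 3) m) in *.
  split.
  - replace (g * S2 - 2 * g * g * S3)
      with ((/ ln 2 * (g * S2) + - / ln 2 * (2 * g * g * S3)) * ln 2) by (field; lra).
    apply Rmult_le_compat_r; lra.
  - replace (g * S2) with ((/ ln 2 * (g * S2)) * ln 2) by (field; lra).
    apply Rmult_le_compat_r; lra.
Qed.

Lemma R_SD_quadratic_error M : (1 <= M)%nat -> exists K, forall g, 0 < g ->
  Rabs (R_SD M g - g / (2 * ln 2) * harm (2 * M)) <= K * (g * g).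
Proof.
  intros HM. pose proof ln2_pos. assert (HMpos : 0 < INR M) by (apply lt_0_INR; lia).
  set (m := (2 * M - 1)%nat).
  set (S3 := sum_f_R0 (fun j => C m j * (-1) ^ j / (INR j + 1) ^ 3) m).
  exists (2 * INR M * Rabs S3 / ln 2). intros g Hg.
  destruct (log2_rayleigh_integral_bounds g m Hg) as [l [Hl Hbounds]].
  fold S3 in Hbounds. rewrite alt_binom_div_succ_sqr in Hbounds.
  replace (S m) with (2 * M)%nat in Hbounds by (unfold m; lia).
  replace (INR m + 1) with (2 * INR M) in Hbounds
    by (unfold m; rewrite minus_INR, mult_INR by lia; simpl; ring).
  assert (HR : R_SD M g = INR M * l) by (unfold R_SD; f_equal; apply improper_int_eq, Hl).
  set (H2M := harm (2 * M)) in *.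
  rewrite HR.
  replace (INR M * l - g / (2 * ln 2) * H2M)
    with (INR M / ln 2 * (l * ln 2 - g * (H2M / (2 * INR M)))) by (field; lra).
  rewrite Rabs_mult, (Rabs_pos_eq (INR M / ln 2)) by (apply Rlt_le, Rdiv_lt_0_compat; lra).
  assert (Rabs (l * ln 2 - g * (H2M / (2 * INR M))) <= 2 * (g * g) * Rabs S3).
  { pose proof (Rle_abs S3). pose proof (Rle_abs (- S3)). rewrite Rabs_Ropp in *.
    apply Rabs_le. split; nra. }
  replace (2 * INR M * Rabs S3 / ln 2 * (g * g))
    with (INR M / ln 2 * (2 * (g * g) * Rabs S3)) by (field; lra).
  apply Rmult_le_compat_l; [apply Rlt_le, Rdiv_lt_0_compat |]; lra.
Qed.

(** * The conventional rate *)

(* On [t >= 1], [2 - t <= 1/t <= 1] squeezes [E1 x] between two elementary integrals. *)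
Lemma exp_E1_error x : 0 < x -> Rabs (exp x * E1 x - / x) <= / (x * x).
Proof.
  intros Hx.
  set (h := fun t => exp (- x * t) / t).
  pose proof (is_RInt_pinfty_exp x 1 Hx) as Hup.
  pose proof (is_RInt_pinfty_plus _ _ _ _ _ (is_RInt_pinfty_scal _ _ _ 2 Hup)
    (is_RInt_pinfty_scal _ _ _ (-1) (is_RInt_pinfty_id_exp x 1 ltac:(lra) Hx))) as Hlow.
  assert (Hbounds : forall t, 1 <= t ->
    2 * exp (- x * t) + -1 * (t * exp (- x * t)) <= h t <= exp (- x * t)).
  { intros t Ht. unfold h. pose proof (exp_pos (- x * t)).
    replace (2 * exp (- x * t) + -1 * (t * exp (- x * t)))
      with ((2 - t) * exp (- x * t)) by ring.
    assert (2 - t <= / t <= 1).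
    { split; [| rewrite <- Rinv_1; apply Rinv_le_contravar; lra].
      apply Rmult_le_reg_r with t; [lra |]. rewrite Rinv_l by lra. nra. }
    unfold Rdiv. rewrite Rmult_comm. split; nra. }
  assert (Hcont : forall t, 1 <= t -> continuous h t).
  { intros t Ht; apply continuous_of_ex_derive; unfold h; auto_derive; lra. }
  assert (Hnonneg : forall t, 1 <= t -> 0 <= h t).
  { intros t Ht. unfold h. apply Rlt_le, Rdiv_lt_0_compat; [apply exp_pos | lra]. }
  destruct (is_RInt_pinfty_dominated h _ 1 _ Hcont
              (fun t Ht => conj (Hnonneg t Ht) (proj2 (Hbounds t Ht))) Hup) as [l Hl].
  assert (HE : E1 x = l) by (unfold E1; apply improper_int_eq, Hl).
  pose proof (is_RInt_pinfty_le _ _ _ _ _ (fun t Ht => proj2 (Hbounds t Ht)) Hl Hup) as Hle.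
  pose proof (is_RInt_pinfty_le _ _ _ _ _ (fun t Ht => proj1 (Hbounds t Ht)) Hlow Hl) as Hge.
  rewrite HE. replace (- x * 1) with (- x) in * by ring.
  assert (Hee : exp x * exp (- x) = 1) by (rewrite <- exp_plus, Rplus_opp_r; apply exp_0).
  pose proof (exp_pos x). pose proof (exp_pos (- x)).
  assert (x * x > 0) by nra.
  apply Rabs_le. split.
  - apply Rmult_le_compat_l with (r := exp x) in Hge; [| lra].
    replace (exp x * (2 * (exp (- x) / x) + -1 * ((1 / x + 1 / (x * x)) * exp (- x))))
      with ((exp x * exp (- x)) * (/ x - / (x * x))) in Hge by (field; lra).
    rewrite Hee in Hge. lra.
  - apply Rmult_le_compat_l with (r := exp x) in Hle; [| lra].
    replace (exp x * (exp (- x) / x)) with ((exp x * exp (- x)) / x) in Hle by (field; lra).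
    rewrite Hee in Hle. assert (0 < / (x * x)) by (apply Rinv_0_lt_compat; lra).
    unfold Rdiv in Hle. lra.
Qed.

Lemma C_nonneg n k : 0 <= C n k.
Proof.
  unfold C. apply Rmult_le_pos; [apply pos_INR |].
  apply Rlt_le, Rinv_0_lt_compat, Rmult_lt_0_compat; apply INR_fact_lt_0.
Qed.

Lemma R_conv_leading_term M g : (1 <= M)%nat -> 0 < g ->
  INR M / 2 * sum_f_R0 (fun k => C (M - 1) k * (-1) ^ k / ((1 + INR k) * ln 2)
                                 * / (2 * (1 + INR k) / g)) (M - 1)
  = g / (4 * ln 2) * harm M.
Proof.
  intros HM Hg. pose proof ln2_pos. assert (0 < INR M) by (apply lt_0_INR; lia).
  rewrite (sum_eq _ (fun k => C (M - 1) k * (-1) ^ k / (INR k + 1) ^ 2 * (g / (2 * ln 2)))).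
  - rewrite <- scal_sum, alt_binom_div_succ_sqr. replace (S (M - 1)) with M by lia.
    rewrite minus_INR by lia. simpl INR. field. lra.
  - intros k _. pose proof (pos_INR k). field. lra.
Qed.

Lemma R_conv_quadratic_error M : (1 <= M)%nat -> exists K, forall g, 0 < g ->
  Rabs (R_conv M g - g / (4 * ln 2) * harm M) <= K * (g * g).
Proof.
  intros HM. pose proof ln2_pos. assert (0 < INR M) by (apply lt_0_INR; lia).
  exists (INR M / 2 * sum_f_R0 (fun k => C (M - 1) k / ln 2) (M - 1)).
  intros g Hg.
  set (x := fun k : nat => 2 * (1 + INR k) / g).
  set (a := fun k : nat => C (M - 1) k * (-1) ^ k / ((1 + INR k) * ln 2)).
  set (d := fun k : nat => exp (x k) * E1 (x k) - / x k).
  assert (Hd : forall k, Rabs (d k) <= g * g).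
  { intros k. pose proof (pos_INR k).
    assert (Hx : 0 < x k) by (apply Rdiv_lt_0_compat; lra).
    apply Rle_trans with (/ (x k * x k)); [apply exp_E1_error, Hx |].
    unfold x. replace (/ (2 * (1 + INR k) / g * (2 * (1 + INR k) / g)))
      with (g * g * / (4 * ((1 + INR k) * (1 + INR k)))) by (field; lra).
    rewrite <- (Rmult_1_r (g * g)) at 2. apply Rmult_le_compat_l; [nra |].
    rewrite <- Rinv_1. apply Rinv_le_contravar; nra. }
  assert (Ha : forall k, Rabs (a k) <= C (M - 1) k / ln 2).
  { intros k. pose proof (pos_INR k). pose proof (C_nonneg (M - 1) k). unfold a, Rdiv.
    rewrite !Rabs_mult, pow_1_abs, Rabs_pos_eq, Rabs_pos_eq by
      (try apply Rlt_le, Rinv_0_lt_compat, Rmult_lt_0_compat; lra).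
    rewrite Rinv_mult, Rmult_1_r. apply Rmult_le_compat_l; [lra |].
    rewrite <- (Rmult_1_l (/ ln 2)) at 2.
    apply Rmult_le_compat_r; [apply Rlt_le, Rinv_0_lt_compat; lra |].
    rewrite <- Rinv_1. apply Rinv_le_contravar; lra. }
  assert (Hsplit : R_conv M g = INR M / 2 * sum_f_R0 (fun k => a k * / x k) (M - 1)
                               + INR M / 2 * sum_f_R0 (fun k => a k * d k) (M - 1)).
  { rewrite <- Rmult_plus_distr_l, <- sum_plus. unfold R_conv. f_equal.
    apply sum_eq. intros k _. unfold a, d, x. ring. }
  assert (Hlead : INR M / 2 * sum_f_R0 (fun k => a k * / x k) (M - 1)
                  = g / (4 * ln 2) * harm M) by exact (R_conv_leading_term M g HM Hg).
  rewrite Hsplit, Hlead.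
  replace (g / (4 * ln 2) * harm M + INR M / 2 * sum_f_R0 (fun k => a k * d k) (M - 1)
           - g / (4 * ln 2) * harm M)
    with (INR M / 2 * sum_f_R0 (fun k => a k * d k) (M - 1)) by ring.
  rewrite Rabs_mult, (Rabs_pos_eq (INR M / 2)), Rmult_assoc by lra.
  apply Rmult_le_compat_l; [lra |].
  eapply Rle_trans; [apply sum_f_R0_triangle |].
  rewrite Rmult_comm, scal_sum. apply sum_Rle. intros k _.
  rewrite Rabs_mult. apply Rmult_le_compat; auto using Rabs_pos.
Qed.

(** * Harmonic numbers and limits *)

Lemma harm_S n : harm (S n) = harm n + / (INR n + 1).
Proof. change (harm (S n)) with (harm n + / INR (S n)). now rewrite S_INR. Qed.

Lemma harm_le n m : (n <= m)%nat -> harm n <= harm m.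
Proof.
  induction 1 as [| m _ IH]; [lra |]. rewrite harm_S. pose proof (pos_INR m).
  assert (0 < / (INR m + 1)) by (apply Rinv_0_lt_compat; lra). lra.
Qed.

Lemma harm_pos n : (1 <= n)%nat -> 0 < harm n.
Proof. intros H. apply Rlt_le_trans with (harm 1); [simpl; lra | now apply harm_le]. Qed.

Lemma harm_double_S M :
  harm (2 * S M) = harm (2 * M) + / (2 * INR M + 1) + / (2 * INR M + 2).
Proof.
  replace (2 * S M)%nat with (S (S (2 * M))) by lia.
  rewrite !harm_S, S_INR, mult_INR. simpl INR.
  replace ((1 + 1) * INR M + 1 + 1) with (2 * INR M + 2) by ring.
  replace ((1 + 1) * INR M + 1) with (2 * INR M + 1) by ring. reflexivity.
Qed.

Lemma harm_double_le M : 2 * harm (2 * M) <= 3 * harm M.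
Proof.
  induction M as [| M IH]; [simpl; lra |].
  rewrite harm_double_S, harm_S. pose proof (pos_INR M).
  assert (/ (2 * INR M + 1) <= / (INR M + 1)) by (apply Rinv_le_contravar; lra).
  assert (/ (2 * INR M + 2) = / (INR M + 1) / 2) by (field; lra).
  lra.
Qed.

Lemma harm_double_sub_succ M :
  harm (2 * S M) - harm (S M)
  = harm (2 * M) - harm M + / ((2 * INR M + 1) * (2 * INR M + 2)).
Proof.
  rewrite harm_double_S, harm_S. pose proof (pos_INR M). field. lra.
Qed.

Lemma harm_double_sub_le M : harm (2 * M) - harm M <= INR M / (INR M + 1).
Proof.
  induction M as [| M IH]; [simpl; lra |].
  rewrite harm_double_sub_succ, S_INR. pose proof (pos_INR M).
  assert (E : (INR M + 1) / (INR M + 1 + 1) - INR M / (INR M + 1)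
              = / ((INR M + 1) * (INR M + 2))) by (field; lra).
  assert (/ ((2 * INR M + 1) * (2 * INR M + 2)) <= / ((INR M + 1) * (INR M + 2)))
    by (apply Rinv_le_contravar; nra).
  lra.
Qed.

Lemma harm_double_sub_ge M : (1 <= M)%nat -> 1 / 2 <= harm (2 * M) - harm M.
Proof.
  induction 1 as [| M HM IH]; [simpl; lra |].
  rewrite harm_double_sub_succ. pose proof (pos_INR M).
  assert (0 < / ((2 * INR M + 1) * (2 * INR M + 2))) by (apply Rinv_0_lt_compat; nra).
  lra.
Qed.

Lemma harm_pow2_ge k : 1 + INR k / 2 <= harm (2 ^ k).
Proof.
  induction k as [| k IH]; [simpl; lra |].
  rewrite S_INR. replace (2 ^ S k)%nat with (2 * 2 ^ k)%nat by (simpl; lia).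
  assert (Hk : (1 <= 2 ^ k)%nat)
    by (apply Nat.le_succ_l, Nat.neq_0_lt_0, Nat.pow_nonzero; lia).
  pose proof (harm_double_sub_ge _ Hk). lra.
Qed.

Lemma harm_ratio_bounds M : (1 <= M)%nat -> 2 <= 2 * harm (2 * M) / harm M <= 3.
Proof.
  intros HM. pose proof (harm_pos M HM). pose proof (harm_double_le M).
  pose proof (harm_le M (2 * M) ltac:(lia)).
  split; apply Rmult_le_reg_r with (harm M); auto;
    unfold Rdiv; rewrite Rmult_assoc, Rinv_l; lra.
Qed.

(* The ratio is [2 + 2 (H_(2M) - H_M) / H_M] with a bounded numerator and [H_M -> oo]. *)
Lemma harm_ratio_cv : Un_cv (fun M => 2 * harm (2 * M) / harm M) 2.
Proof.
  intros eps Heps.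
  destruct (INR_unbounded (4 / eps)) as [k Hk].
  exists (Nat.max 1 (2 ^ k)). intros n Hn. unfold Rdist.
  assert (H1 : (1 <= n)%nat) by lia.
  pose proof (harm_pos n H1).
  pose proof (harm_le (2 ^ k) n ltac:(lia)). pose proof (harm_pow2_ge k).
  pose proof (harm_double_sub_le n). pose proof (harm_double_sub_ge n H1).
  pose proof (pos_INR n).
  assert (INR n / (INR n + 1) <= 1)
    by (apply Rmult_le_reg_r with (INR n + 1); [lra |];
        unfold Rdiv; rewrite Rmult_assoc, Rinv_l; lra).
  replace (2 * harm (2 * n) / harm n - 2)
    with (2 * (harm (2 * n) - harm n) / harm n) by (field; lra).
  rewrite Rabs_pos_eq by (apply Rmult_le_pos; [lra | apply Rlt_le, Rinv_0_lt_compat; lra]).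
  apply Rmult_lt_reg_r with (harm n); [lra |].
  unfold Rdiv. rewrite Rmult_assoc, Rinv_l by lra.
  assert (Hlarge : 2 / eps < harm n) by (unfold Rdiv in *; lra).
  apply Rmult_lt_compat_l with (r := eps) in Hlarge; [| lra].
  replace (eps * (2 / eps)) with 2 in Hlarge by (field; lra). lra.
Qed.

Lemma limit_ratio_quadratic_error (F D : R -> R) c K : c <> 0 ->
  (forall g, 0 < g -> D g = c * g) ->
  (forall g, 0 < g -> Rabs (F g - D g) <= K * (g * g)) ->
  limit1_in (fun g => F g / D g) (fun g => 0 < g) 1 0.
Proof.
  intros Hc HD HF eps Heps. unfold dist; simpl; unfold Rdist.
  assert (Hca : 0 < Rabs c) by (apply Rabs_pos_lt; auto).
  pose proof (Rabs_pos K).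
  exists (eps * Rabs c / (Rabs K + 1)). split.
  { apply Rdiv_lt_0_compat; [apply Rmult_lt_0_compat |]; lra. }
  intros g [Hg Hd]. rewrite Rminus_0_r, Rabs_pos_eq in Hd by lra.
  specialize (HF g Hg). rewrite HD in HF |- * by auto.
  replace (F g / (c * g) - 1) with ((F g - c * g) / (c * g)) by (field; lra).
  unfold Rdiv. rewrite Rabs_mult, Rabs_inv, Rabs_mult, (Rabs_pos_eq g)
    by (try apply Rmult_integral_contrapositive; lra).
  apply Rmult_lt_reg_r with (Rabs c * g); [nra |].
  rewrite Rmult_assoc, Rinv_l, Rmult_1_r by nra.
  assert (K * (g * g) <= Rabs K * (g * g)) by (apply Rmult_le_compat_r; [nra | apply Rle_abs]).
  assert (g * (Rabs K + 1) < eps * Rabs c).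
  { apply Rmult_lt_reg_r with (/ (Rabs K + 1)); [apply Rinv_0_lt_compat; lra |].
    rewrite Rmult_assoc, Rinv_r by lra. lra. }
  nra.
Qed.

Lemma R_SD_equivalent M : (1 <= M)%nat ->
  limit1_in (fun g => R_SD M g / (g / (2 * ln 2) * harm (2 * M))) (fun g => 0 < g) 1 0.
Proof.
  intros HM. pose proof ln2_pos. pose proof (harm_pos (2 * M) ltac:(lia)).
  destruct (R_SD_quadratic_error M HM) as [K HK].
  apply (limit_ratio_quadratic_error _ _ (harm (2 * M) / (2 * ln 2)) K); auto.
  - apply Rgt_not_eq, Rdiv_lt_0_compat; lra.
  - intros g _. field. lra.
Qed.

Lemma R_conv_equivalent M : (1 <= M)%nat ->
  limit1_in (fun g => R_conv M g / (g / (4 * ln 2) * harm M)) (fun g => 0 < g) 1 0.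
Proof.
  intros HM. pose proof ln2_pos. pose proof (harm_pos M HM).
  destruct (R_conv_quadratic_error M HM) as [K HK].
  apply (limit_ratio_quadratic_error _ _ (harm M / (4 * ln 2)) K); auto.
  - apply Rgt_not_eq, Rdiv_lt_0_compat; lra.
  - intros g _. field. lra.
Qed.

Theorem mainTheorem5 :
  (forall M : nat, (1 <= M)%nat ->
     limit1_in (fun g => R_SD M g / (g / (2 * ln 2) * harm (2 * M)))
               (fun g => 0 < g) 1 0
  /\ limit1_in (fun g => R_conv M g / (g / (4 * ln 2) * harm M))
               (fun g => 0 < g) 1 0
  /\ limit1_in (fun g => R_SD M g / R_conv M g)
               (fun g => 0 < g) (2 * harm (2 * M) / harm M) 0
  /\ 2 <= 2 * harm (2 * M) / harm M <= 3)
  /\ 2 * harm 2 / harm 1 = 3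
  /\ Un_cv (fun M => 2 * harm (2 * M) / harm M) 2.
Proof.
  split; [| split; [simpl; field | exact harm_ratio_cv]].
  intros M HM. pose proof ln2_pos.
  pose proof (harm_pos M HM). pose proof (harm_pos (2 * M) ltac:(lia)).
  pose proof (R_SD_equivalent M HM) as Hsd. pose proof (R_conv_equivalent M HM) as Hconv.
  split; [exact Hsd | split; [exact Hconv | split; [| now apply harm_ratio_bounds]]].
  pose proof (limit_mul _ _ _ _ _ _
    (limit_mul _ _ _ _ _ _ Hsd (limit_inv _ _ _ _ Hconv R1_neq_R0))
    (limit_free (fun _ => 2 * harm (2 * M) / harm M) (fun g => 0 < g) 0 0)) as Hratio.
  rewrite Rinv_1, !Rmult_1_l in Hratio.
  apply limit1_ext with (2 := Hratio). intros g Hg.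
  (* Holds even when [R_conv M g = 0]: both sides then vanish, as [/ 0 = 0]. *)
  unfold Rdiv. rewrite !Rinv_mult, !Rinv_inv. set (r := / R_conv M g).
  field. repeat split; lra.
Qed.
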